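(* Let $\mathbb{K}$ be a topological field, $d\in\mathbb{N}$, $F$ a topological $\mathbb{K}$-vector space, $U\subseteq\mathbb{K}^d$ open or of the form $U_1\times\cdots\times U_d$ with $U_i\subseteq\mathbb{K}$ having dense interior, and $f\colon U\to F$. If $f$ is $C^k_{BGN}$ for some $k\in\mathbb{N}_0$, then $f$ is $C^k_{SDS}$. If $\mathbb{K}$ is a valued field, $\sigma>0$ and $f$ is $C^{k,\sigma}_{BGN}$, then $f$ is $C^{k,\sigma}_{SDS}$.
   Context: Topological fields are Hausdorff and non-discrete; vector spaces Hausdorff; a valued field carries an absolute value defining a non-discrete topology. BGN: for $V\subseteq E$ with dense interior, $V^{[1]}=\{(x,y,t)\in V\times E\times\mathbb{K}: x+ty\in V\}$, $V^{]1[}$ its subset with $t\neq0$, $g^{]1[}(x,y,t)=(g(x+ty)-g(x))/t$. $g$ is $C^0_{BGN}$ if continuous, $C^1_{BGN}$ if moreover $g^{]1[}$ extends continuously to $g^{[1]}$ on $V^{[1]}$, $C^k_{BGN}$ if $C^1_{BGN}$ with $g^{[1]}$ $C^{k-1}_{BGN}$; $g^{[k]}=(g^{[1]})^{[k-1]}$, $g^{[0]}=g$. SDS: for $\alpha\in\mathbb{N}_0^d$, write $x\in\mathbb{K}^{d+|\alpha|}$ as $(x^{(1)},\ldots,x^{(d)})$ with $x^{(i)}=(x^{(i)}_0,\ldots,x^{(i)}_{\alpha_i})$; $U^{<\alpha>}$: all $x$ with $(x^{(1)}_{i_1},\ldots,x^{(d)}_{i_d})\in U$ for all $0\le i_\ell\le\alpha_\ell$;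 $U^{>\alpha<}$: those with pairwise distinct entries within each $x^{(i)}$; $f^{>0<}=f$, $f^{>\alpha<}(x)=\sum_{j_1,\ldots,j_d}\big(\prod_{\ell}\prod_{k_\ell\neq j_\ell}(x^{(\ell)}_{j_\ell}-x^{(\ell)}_{k_\ell})^{-1}\big)f(x^{(1)}_{j_1},\ldots,x^{(d)}_{j_d})$ ($0\le j_\ell,k_\ell\le\alpha_\ell$). $f$ is $C^k_{SDS}$ if continuous and, for every $1\le|\alpha|\le k$, $f^{>\alpha<}$ has a continuous extension $f^{<\alpha>}$ to $U^{<\alpha>}$ ($f^{<0>}=f$). Hölder: a gauge on $E$ is $q\colon E\to[0,\infty[$ with $q(tx)=|t|q(x)$ and $\{q<r\}$ a $0$-neighbourhood for all $r>0$; $g\colon V\to F$ is $C^{0,\sigma}$ if for each $x_0\in V$ and gauge $q$ on $F$ there exist a gauge $p$ on $E$ and a neighbourhood $W$ of $x_0$ in $V$ with $q(g(y)-g(x))\le p(y-x)^\sigma$ on $W$. $C^{k,\sigma}_{BGN}$: $C^k_{BGN}$ with all $f^{[j]}$ ($j\le k$) $C^{0,\sigma}$; $C^{k,\sigma}_{SDS}$: $C^k_{SDS}$ with all $f^{<\alpha>}$ ($|\alpha|\le k$) $C^{0,\sigma}$. *)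

From HB Require Import structures.
From mathcomp Require Import all_boot all_order all_algebra.
From mathcomp Require Import all_classical all_reals topology function_spaces exp.
Set Implicit Arguments.
Unset Strict Implicit.
Unset Printing Implicit Defensive.
Import Order.TTheory GRing.Theory Num.Theory.
Local Open Scope classical_set_scope.
Local Open Scope ring_scope.

(** * Carriers: a field with a topology, and K-modules with a topology.
    The axioms (continuity of operations, Hausdorff, non-discrete) are
    imposed separately as Prop predicates below. *)
HB.structure Definition TopNmod := {M of Topological M & GRing.Nmodule M}.
HB.structure Definition TopZmod := {M of Topological M & GRing.Zmodule M}.
HB.structure Definition TopLmod (K : nzRingType) :=
  {M of Topological M & GRing.Lmodule K M}.
HB.structure Definition TopField := {K of GRing.Field K & Topological K}.
HB.saturate prod.

Section Carriers.
Variable K : TopField.type.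

Definition Kv := K^o.
HB.instance Definition _ := GRing.Lmodule.on Kv.
HB.instance Definition _ := Topological.copy Kv K.

Definition Kpow (I : finType) := {ptws I -> Kv}.
HB.instance Definition _ (I : finType) := Topological.on (Kpow I).
HB.instance Definition _ (I : finType) :=
  GRing.Lmodule.copy (Kpow I) (I -> Kv).
End Carriers.

Definition is_topological_field (K : TopField.type) : Prop :=
  [/\ continuous (fun p : K * K => p.1 + p.2),
      continuous (fun x : K => - x),
      continuous (fun p : K * K => p.1 * p.2),
      (forall x : K, x != 0 -> ((fun y : K => y^-1) @ x --> x^-1)) &
      hausdorff_space K /\ ~ (forall x : K, open [set x])].

Definition is_tvs (K : TopField.type) (F : TopLmod.type K) : Prop :=
  [/\ continuous (fun p : F * F => p.1 + p.2),
      continuous (fun p : Kv K * F => p.1 *: p.2) &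
      hausdorff_space F].

Definition is_valued_field (K : TopField.type) (R : realType) (abs : K -> R)
  : Prop :=
  [/\ (forall x, 0 <= abs x),
      (forall x, abs x = 0 <-> x = 0),
      (forall x y, abs (x * y) = abs x * abs y),
      (forall x y, abs (x + y) <= abs x + abs y) &
      (forall (x : K) (A : set K),
          nbhs x A <-> exists2 e : R, 0 < e & [set y | abs (y - x) < e] `<=` A)].

Section Defs.
Variables (K : TopField.type) (F : TopLmod.type K).

Definition gauge (R : realType) (abs : K -> R) (E : TopLmod.type K) (q : E -> R)
  : Prop :=
  [/\ (forall x, 0 <= q x),
      (forall (t : Kv K) (x : E), q (t *: x) = abs t * q x) &
      (forall r : R, 0 < r -> nbhs (0 : E) [set x | q x < r])].

Definition C0sigma (R : realType) (abs : K -> R) (sigma : R)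
  (E : TopLmod.type K) (V : set E) (g : E -> F) : Prop :=
  forall x0, V x0 -> forall q : F -> R, gauge abs q ->
    exists p : E -> R, gauge abs p /\
    exists2 W : set E, nbhs x0 W &
      forall x y, V x -> V y -> W x -> W y ->
        q (g y - g x) <= powR (p (y - x)) sigma.

Definition V1 (E : TopLmod.type K) (V : set E) : set (E * E * Kv K) :=
  [set z | V z.1.1 /\ V (z.1.1 + z.2 *: z.1.2)].

Definition V1o (E : TopLmod.type K) (V : set E) : set (E * E * Kv K) :=
  [set z | V1 V z /\ z.2 != 0].

Definition gdq (E : TopLmod.type K) (g : E -> F) : E * E * Kv K -> F :=
  fun z => (z.2 : K)^-1 *: (g (z.1.1 + z.2 *: z.1.2) - g z.1.1).

Fixpoint CkBGN (k : nat) (E : TopLmod.type K) (V : set E) (g : E -> F) : Prop :=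
  {within V, continuous g} /\
  match k with
  | 0 => True
  | k'.+1 => exists g1 : E * E * Kv K -> F,
      (forall z, V1o V z -> g1 z = gdq g z) /\ CkBGN k' (V1 V) g1
  end.

Fixpoint CksigmaBGN (R : realType) (abs : K -> R) (sigma : R)
  (k : nat) (E : TopLmod.type K) (V : set E) (g : E -> F) : Prop :=
  [/\ {within V, continuous g}, C0sigma abs sigma V g &
  match k with
  | 0 => True
  | k'.+1 => exists g1 : E * E * Kv K -> F,
      (forall z, V1o V z -> g1 z = gdq g z) /\
      CksigmaBGN abs sigma k' (V1 V) g1
  end].

Variable d : nat.

Definition mabs (alpha : 'I_d -> nat) : nat := (\sum_(i < d) alpha i)%N.

(** the coordinates of K^{d+|alpha|}: pairs (i, j) with j <= alpha_i *)
Definition sds_idx (alpha : 'I_d -> nat) : finType :=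
  {i : 'I_d & 'I_(alpha i).+1}.

Local Notation sds_pt alpha := (Kpow K (sds_idx alpha)).

Definition sds_sel (alpha : 'I_d -> nat) (x : sds_pt alpha)
  (j : {dffun forall i : 'I_d, 'I_(alpha i).+1}) : Kpow K 'I_d :=
  fun i => x (Tagged (fun i => 'I_(alpha i).+1) (j i)).

Definition U_ang (U : set (Kpow K 'I_d)) (alpha : 'I_d -> nat)
  : set (sds_pt alpha) :=
  [set x | forall j, U (sds_sel x j)].

Arguments U_ang : clear implicits.

Definition U_brack (U : set (Kpow K 'I_d)) (alpha : 'I_d -> nat)
  : set (sds_pt alpha) :=
  [set x | U_ang U alpha x /\
     forall (i : 'I_d) (j k : 'I_(alpha i).+1), j != k ->
       x (Tagged (fun i => 'I_(alpha i).+1) j)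
         != x (Tagged (fun i => 'I_(alpha i).+1) k)].

Arguments U_brack : clear implicits.
Definition fdd (f : Kpow K 'I_d -> F) (alpha : 'I_d -> nat)
  (x : sds_pt alpha) : F :=
  \sum_(j : {dffun forall i : 'I_d, 'I_(alpha i).+1})
    (\prod_(l < d) \prod_(k : 'I_(alpha l).+1 | k != j l)
        ((x (Tagged (fun i => 'I_(alpha i).+1) (j l))
          - x (Tagged (fun i => 'I_(alpha i).+1) k) : K)^-1))
    *: f (sds_sel x j).

Definition CkSDS (k : nat) (U : set (Kpow K 'I_d)) (f : Kpow K 'I_d -> F)
  : Prop :=
  {within U, continuous f} /\
  forall alpha : 'I_d -> nat, (1 <= mabs alpha <= k)%N ->
    exists h : sds_pt alpha -> F,
      {within U_ang U alpha, continuous h} /\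
      (forall x, U_brack U alpha x -> h x = fdd f x).

Definition CksigmaSDS (R : realType) (abs : K -> R) (sigma : R)
  (k : nat) (U : set (Kpow K 'I_d)) (f : Kpow K 'I_d -> F) : Prop :=
  [/\ {within U, continuous f}, C0sigma abs sigma U f &
  forall alpha : 'I_d -> nat, (1 <= mabs alpha <= k)%N ->
    exists h : sds_pt alpha -> F,
      [/\ {within U_ang U alpha, continuous h},
          C0sigma abs sigma (U_ang U alpha) h &
          (forall x, U_brack U alpha x -> h x = fdd f x)]].
End Defs.

(* Write g_n for the n-th BGN derivative f^{[n]}.  Starting from the base nodes x^{(l)}_0,
   insert the remaining nodes x^{(i)}_b one at a time.  Inserting b into a node set S that
   contains a = x^{(i)}_0 is one difference quotient: the divided difference on S + b is
   (f[S - a + b] - f[S]) / (x_b - x_a), while g_{n+1}(p, v, t) = (g_n(p + t v) - g_n(p)) / t.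
   Hence there are affine continuous maps Phi_n with g_n (Phi_n x) = f[S_n] at points x with
   distinct nodes: Phi_{n+1} x = (Phi_n x, v, x_b - x_a), where v is the linear part of Phi_n
   at the unit vector of node a, so that Phi_n x + (x_b - x_a) v is Phi_n at x with node a
   moved to x_b.  Once all nodes are inserted, g_|alpha| o Phi_|alpha| is defined on all of
   U^{<alpha>} and extends f^{>alpha<}; it is C^{0,sigma} when g_|alpha| is, Phi being affine. *)

From HB Require Import structures.
From mathcomp Require Import all_boot all_order all_algebra.
From mathcomp Require Import all_classical all_reals topology function_spaces exp.
From mathcomp Require Import ring.

Set Implicit Arguments.
Unset Strict Implicit.
Unset Printing Implicit Defensive.
Import Order.TTheory GRing.Theory Num.Theory.

Local Open Scope ring_scope.

Section DividedDifferenceWeights.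
Variables (K : fieldType) (I : finType) (y : I -> K).

(* The divided difference of h at the nodes y @: T is \sum_(p in T) dd_weight T p * h (y p). *)
Definition dd_weight (T : {set I}) (p : I) : K :=
  if p \in T then \prod_(q in T | q != p) (y p - y q)^-1 else 0.

Lemma dd_weight_set1 (q p : I) : dd_weight [set q]%SET p = (p == q)%:R.
Proof.
rewrite /dd_weight finset.in_set1; case: eqP => [->|//].
by rewrite big_pred0 // => r; rewrite finset.in_set1 andbN.
Qed.

Lemma prod_setU1 (F : I -> K) (T : {set I}) c p : c \notin T -> c != p ->
  \prod_(q in c |: T | q != p) F q = F c * \prod_(q in T | q != p) F q.
Proof.
move=> cT cp; rewrite (bigD1 c) /= ?setU11 //; congr (_ * _).
apply: eq_bigl => q; rewrite in_setU1.
by case: (q =P c) => [->|_]; rewrite ?eqxx ?(negbTE cT) ?andbF ?andbT.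
Qed.

Lemma prod_setU1_neq (F : I -> K) (T : {set I}) c :
  \prod_(q in c |: T | q != c) F q = \prod_(q in T | q != c) F q.
Proof.
by apply: eq_bigl => q; rewrite in_setU1; case: (q =P c); rewrite ?andbF.
Qed.

Lemma dd_weight_setU1 (T : {set I}) a b p : injective y -> a \in T -> b \notin T ->
  dd_weight (b |: T) p = (y b - y a)^-1 * (dd_weight (b |: T :\ a) p - dd_weight T p).
Proof.
move=> y_inj aT bT.
have ab : a != b by apply: contraNneq bT => <-.
have yD u v : u != v -> y u - y v != 0.
  by move=> uv; rewrite subr_eq0 (inj_eq y_inj).
have drop_a u : u != a -> \prod_(q in T | q != u) (y u - y q)^-1 =
    (y u - y a)^-1 * \prod_(q in T :\ a | q != u) (y u - y q)^-1.
  move=> ua; rewrite (bigD1 a) /=; last by rewrite aT eq_sym.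
  congr (_ * _); apply: eq_bigl => q; rewrite in_setD1.
  by case: (q \in T); case: (q != a); case: (q != u).
rewrite /dd_weight !in_setU1 in_setD1.
case: (p =P b) => [->|/eqP pb] /=.
  by rewrite !prod_setU1_neq (negbTE bT) subr0 drop_a 1?eq_sym.
case: (p =P a) => [->|/eqP pa] /=.
  by rewrite aT sub0r prod_setU1 1?eq_sym // mulrN -mulNr -invrN opprB.
case: ifP => pT; last by rewrite subrr mulr0.
have bTa : b \notin T :\ a by rewrite in_setD1 (negbTE bT) andbF.
have bp : b != p by rewrite eq_sym.
rewrite !prod_setU1 // drop_a //.
by field; rewrite !yD // eq_sym.
Qed.

End DividedDifferenceWeights.

Section Relabel.
Variables (T T' : finType).

Definition relabel (a b : T) (p : T) : T := if p == a then b else p.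

Lemma imset_relabel (S : {set T}) a b :
  a \in S -> b \notin S -> relabel a b @: S = b |: S :\ a.
Proof.
move=> aS bS; apply/setP => p; rewrite in_setU1 in_setD1.
apply/imsetP/idP => [[q qS ->]|/orP[/eqP ->|/andP[pa pS]]].
- by rewrite /relabel; case: (q =P a) => [_|/eqP qa]; rewrite ?eqxx // qa qS orbT.
- by exists a; rewrite /relabel ?eqxx.
- by exists p; rewrite /relabel ?(negbTE pa).
Qed.

Lemma imsetD1_in (pi : T -> T') (S : {set T}) a : {in S &, injective pi} -> a \in S ->
  pi @: (S :\ a) = pi @: S :\ pi a.
Proof.
move=> pi_inj aS; apply/setP => p; rewrite in_setD1.
apply/imsetP/andP => [[q /setD1P[qa qS] ->]|[pa /imsetP[q qS pq]]].
  by split; [apply: contra qa => /eqP/pi_inj ->|apply: imset_f].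
by exists q; rewrite // in_setD1 qS andbT; apply: contra pa => /eqP qa; rewrite pq qa.
Qed.

Lemma relabel_injective_in (pi : T -> T') (S : {set T}) a b :
  {in b |: S &, injective pi} -> b \notin S -> {in S &, injective (pi \o relabel a b)}.
Proof.
move=> pi_inj bS p q pS qS.
have relabel_in r : r \in S -> relabel a b r \in b |: S.
  by rewrite /relabel; case: (r =P a) => _ rS; rewrite !inE ?eqxx ?rS ?orbT.
move=> /= /(pi_inj _ _ (relabel_in _ pS) (relabel_in _ qS)); rewrite /relabel.
case: (p =P a) => [->|_]; case: (q =P a) => [->|_] // e.
- by move: bS; rewrite e qS.
- by move: bS; rewrite -e pS.
Qed.

Lemma imset_comp_relabel (pi : T -> T') (S : {set T}) a b :
  {in b |: S &, injective pi} -> a \in S -> b \notin S ->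
  (pi \o relabel a b) @: S = pi b |: pi @: S :\ pi a.
Proof.
move=> pi_inj aS bS; rewrite imset_comp imset_relabel // imsetU1 imsetD1_in //.
by apply: sub_in2 pi_inj => p; apply: setU1r.
Qed.

Lemma imset_notin (pi : T -> T') (S : {set T}) b :
  {in b |: S &, injective pi} -> b \notin S -> pi b \notin pi @: S.
Proof.
move=> pi_inj bS; apply/imsetP => -[p pS /(pi_inj _ _ (setU11 _ _) (setU1r _ pS)) bp].
by move: bS; rewrite bp pS.
Qed.

End Relabel.

Section Topology.
Local Open Scope classical_set_scope.

Lemma ptws_continuous (X Y : topologicalType) (I : eqType) (g : X -> {ptws I -> Y}) :
  (forall i, continuous (fun x => g x i)) -> continuous g.
Proof.
move=> gi x; apply/cvg_sup => i.
exact: (@continuous_comp_initial _ X Y (fun h : I -> Y => h i) g (gi i)).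
Qed.

Lemma continuous_pair (X Y Z : topologicalType) (u : X -> Y) (v : X -> Z) :
  continuous u -> continuous v -> continuous (fun x => (u x, v x)).
Proof. by move=> cu cv x; apply: cvg_pair (cu x) (cv x). Qed.

Lemma continuous_within_comp (X Y Z : topologicalType) (A : set X) (V : set Y)
    (phi : X -> Y) (g : Y -> Z) :
  {within V, continuous g} -> continuous phi -> (forall x, A x -> V (phi x)) ->
  {within A, continuous (g \o phi)}.
Proof.
move=> cg cphi AV; apply/subspace_continuousP => x Ax.
have /subspace_continuousP /(_ _ (AV _ Ax)) cgx := cg.
apply: cvg_trans cgx => W /(cphi x).
exact: filterS (fun y Wy Ay => Wy (AV _ Ay)).
Qed.

End Topology.

Section TopologicalVectorSpaces.
Local Open Scope classical_set_scope.
Variables (K : TopField.type) (F : TopLmod.type K).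

Lemma continuous_subr (X : topologicalType) (u v : X -> K) :
  is_topological_field K -> continuous u -> continuous v ->
  continuous (fun x => u x - v x).
Proof.
case=> add_c opp_c _ _ _ cu cv x.
have cuv : continuous (fun x => (u x, - v x)).
  by apply: continuous_pair => // y; apply: continuous_comp (cv y) (opp_c _).
exact: continuous_comp (cuv x) (add_c _).
Qed.

Lemma C0sigma_comp_affine (R : realType) (abs : K -> R) (sigma : R)
    (E1 E2 : TopLmod.type K) (V : set E2) (g : E2 -> F) (A : set E1)
    (phi L : E1 -> E2) :
  C0sigma abs sigma V g -> continuous phi -> continuous L ->
  (forall x y, phi y - phi x = L (y - x)) -> (forall (t : K) z, L (t *: z) = t *: L z) ->
  (forall x, A x -> V (phi x)) -> C0sigma abs sigma A (g \o phi).
Proof.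
move=> g_hol phi_c L_c phi_aff L_hom AV x0 Ax0 q q_gauge.
have [p [[p_ge0 p_hom p_nbhs] [W W_x0 g_le]]] := g_hol _ (AV _ Ax0) q q_gauge.
have L0 : L 0 = 0 by rewrite -(scale0r (0 : E1)) L_hom scale0r.
exists (p \o L); split.
  split => [z|t z|r r_gt0] /=; first exact: p_ge0.
    by rewrite L_hom p_hom.
  by apply: (L_c 0 [set y | p y < r]); rewrite L0; apply: p_nbhs.
exists (phi @^-1` W); first exact: phi_c x0 _ W_x0.
by move=> x y Ax Ay Wx Wy /=; rewrite -phi_aff; apply: g_le => //; apply: AV.
Qed.

End TopologicalVectorSpaces.

Section DividedDifferences.
Variables (K : TopField.type) (d : nat) (alpha : 'I_d -> nat).
Variables (F : TopLmod.type K) (f : Kpow K 'I_d -> F).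

Local Notation I := (sds_idx alpha).
Local Notation J := {dffun forall i : 'I_d, 'I_(alpha i).+1}.
Local Notation P := (Kpow K I).
Local Notation tg k := (Tagged (fun i => 'I_(alpha i).+1) k).

Definition coord (x : P) (l : 'I_d) : 'I_(alpha l).+1 -> K := fun k => x (tg k).
Arguments coord x l : clear implicits.

Definition fiber (S : {set I}) (l : 'I_d) : {set 'I_(alpha l).+1} :=
  [set k | tg k \in S].
Arguments fiber S l : clear implicits.

Definition weighted_sum (w : forall l, 'I_(alpha l).+1 -> K) (x : P) : F :=
  \sum_(j : J) (\prod_(l < d) w l (j l)) *: f (sds_sel x j).

Definition divdiff (S : {set I}) (x : P) : F :=
  weighted_sum (fun l => dd_weight (coord x l) (fiber S l)) x.

Lemma weighted_sum_lin_at (i : 'I_d) (c : K) w1 w2 w3 x :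
  (forall l, l != i -> w1 l =1 w3 l /\ w2 l =1 w3 l) ->
  (forall k, w1 i k = c * (w2 i k - w3 i k)) ->
  weighted_sum w1 x = c *: (weighted_sum w2 x - weighted_sum w3 x).
Proof.
move=> same wi; rewrite /weighted_sum -sumrB scaler_sumr; apply: eq_bigr => j _.
rewrite -scalerBl scalerA; congr (_ *: _).
have prod_at_i (w : forall l, 'I_(alpha l).+1 -> K) :
    \prod_(l < d) w l (j l) = w i (j i) * \prod_(l < d | l != i) w l (j l).
  by rewrite (bigD1 i).
rewrite !prod_at_i wi.
have -> : \prod_(l < d | l != i) w1 l (j l) = \prod_(l < d | l != i) w3 l (j l).
  by apply: eq_bigr => l /same [->].
have -> : \prod_(l < d | l != i) w2 l (j l) = \prod_(l < d | l != i) w3 l (j l).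
  by apply: eq_bigr => l /same [_ ->].
by rewrite -mulrBl mulrA.
Qed.

Lemma Tagged_neq (l i : 'I_d) (k : 'I_(alpha l).+1) (b : 'I_(alpha i).+1) :
  l != i -> (tg k == tg b) = false.
Proof. by move=> li; apply: contraNF li => /eqP/(congr1 tag) /= ->. Qed.

Lemma fiber_setU1 (S : {set I}) i (b : 'I_(alpha i).+1) :
  fiber (tg b |: S) i = b |: fiber S i.
Proof. by apply/setP => k; rewrite !inE eq_Tagged. Qed.

Lemma fiber_setD1 (S : {set I}) i (a : 'I_(alpha i).+1) :
  fiber (S :\ tg a) i = fiber S i :\ a.
Proof. by apply/setP => k; rewrite !inE eq_Tagged. Qed.

Lemma fiber_setU1_neq (S : {set I}) l i (b : 'I_(alpha i).+1) :
  l != i -> fiber (tg b |: S) l = fiber S l.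
Proof. by move=> li; apply/setP => k; rewrite !inE Tagged_neq. Qed.

Lemma fiber_setD1_neq (S : {set I}) l i (a : 'I_(alpha i).+1) :
  l != i -> fiber (S :\ tg a) l = fiber S l.
Proof. by move=> li; apply/setP => k; rewrite !inE Tagged_neq. Qed.

Lemma divdiff_setU1 (S : {set I}) x (A B : I) : (forall l, injective (coord x l)) ->
  tag A = tag B -> A \in S -> B \notin S ->
  divdiff (B |: S) x = (x B - x A)^-1 *: (divdiff (B |: S :\ A) x - divdiff S x).
Proof.
case: B => i b; case: A => m a x_inj /= mi; subst m => aS bS.
rewrite /divdiff; apply: (weighted_sum_lin_at (i := i)) => [l li|k].
  by split => k; rewrite ?fiber_setU1_neq ?fiber_setD1_neq.
rewrite !fiber_setU1 fiber_setD1.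
by rewrite (dd_weight_setU1 (a := a) _ (x_inj i)) ?inE.
Qed.

Lemma divdiff_imset x (j : J) : divdiff [set tg (j l) | l : 'I_d]%SET x = f (sds_sel x j).
Proof.
have fib l : fiber [set tg (j m) | m : 'I_d]%SET l = [set j l]%SET.
  apply/setP => k; rewrite inE finset.in_set1.
  apply/imsetP/eqP => [[m _ e]|->]; last by exists l.
  by have lm := congr1 tag e; simpl in lm; subst m; apply: eq_from_Tagged e.
rewrite /divdiff /weighted_sum (bigD1 j) //= big1 ?scale1r => [|l _]; last first.
  by rewrite fib dd_weight_set1 eqxx.
rewrite big1 ?addr0 // => j' j'j.
have [l jl] : exists l, j' l != j l.
  apply/existsP; apply: contraR j'j => /existsPn eq_j'j.
  by apply/eqP/ffunP => l; apply/eqP/negPn/eq_j'j.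
by rewrite (bigD1 l) //= fib dd_weight_set1 (negbTE jl) mul0r scale0r.
Qed.

Lemma divdiff_setT x : divdiff [set: I] x = fdd f x.
Proof.
rewrite /divdiff /weighted_sum /fdd; apply: eq_bigr => j _; congr (_ *: _).
apply: eq_bigr => l _; rewrite /dd_weight.
have -> : fiber [set: I] l = [set: 'I_(alpha l).+1] by apply/setP => k; rewrite !inE.
by rewrite inE; apply: eq_bigl => k; rewrite inE.
Qed.

Lemma U_brack_coord_injective U x : U_brack U x -> forall l, injective (coord x l).
Proof. by case=> _ x_inj l j k; apply: contra_eq; apply: x_inj. Qed.

Lemma U_brack_node_injective U (x : P) p q :
  U_brack U x -> tag p = tag q -> x p = x q -> p = q.
Proof.
case: p q => i a [m b] [_ x_inj] /= im; subst m => xab.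
by congr (Tagged _ _); apply: contra_eq xab; apply: x_inj.
Qed.

Definition tag_preserving (pi : I -> I) := forall p, tag (pi p) = tag p.

Lemma tag_preserving_sel pi (j : J) : tag_preserving pi ->
  exists j' : J, forall l, pi (tg (j l)) = tg (j' l).
Proof.
move=> pi_tag.
have pick l : exists k : 'I_(alpha l).+1, pi (tg (j l)) = tg k.
  by move: (pi_tag (tg (j l))); case: (pi (tg (j l))) => m k /= ml; subst m; exists k.
have [u hu] := fin_all_exists pick.
by exists (finfun u) => l; rewrite ffunE.
Qed.

Lemma U_ang_relabel U x pi : tag_preserving pi -> U_ang U x -> U_ang U (x \o pi : P).
Proof.
move=> pi_tag xU j; have [j' hj'] := tag_preserving_sel j pi_tag.
suff -> : sds_sel (x \o pi : P) j = sds_sel x j' by apply: xU.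
by apply: funext => l; rewrite /sds_sel /= hj'.
Qed.

End DividedDifferences.
Arguments coord {K d alpha} x l.

Section BGNChain.
Local Open Scope classical_set_scope.
Variables (K : TopField.type) (d : nat) (F : TopLmod.type K).

Fixpoint bgn_space (n : nat) : TopLmod.type K :=
  match n with 0 => Kpow K 'I_d | n.+1 => (bgn_space n * bgn_space n * Kv K)%type end.

Lemma bgn_space_affine n (u v u' v' : bgn_space n) (c c' t : K) :
  ((u, v, c) : bgn_space n.+1) + t *: ((u', v', c') : bgn_space n.+1) =
  (u + t *: u', v + t *: v', c + t * c').
Proof. by []. Qed.

Variables (U : set (Kpow K 'I_d)) (f : Kpow K 'I_d -> F).

Fixpoint bgn_domain (n : nat) : set (bgn_space n) :=
  match n return set (bgn_space n) with 0 => U | n.+1 => V1 (@bgn_domain n) end.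
Arguments bgn_domain n : clear implicits.

Fixpoint bgn_chain (n : nat) : (bgn_space n -> F) -> Prop :=
  match n return (bgn_space n -> F) -> Prop with
  | 0 => fun g => g = f
  | n.+1 => fun g1 => exists2 g, @bgn_chain n g &
      forall z, V1o (bgn_domain n) z -> g1 z = gdq g z
  end.
Arguments bgn_chain n : clear implicits.

Lemma exists_bgn_chain (P : nat -> forall E : TopLmod.type K, set E -> (E -> F) -> Prop)
    (k : nat) :
  (forall m (E : TopLmod.type K) (V : set E) g, P m.+1 E V g ->
     exists g1, (forall z, V1o V z -> g1 z = gdq g z) /\ P m _ (V1 V) g1) ->
  P k _ U f ->
  forall n, (n <= k)%N -> exists g, bgn_chain n g /\ P (k - n)%N _ (bgn_domain n) g.
Proof.
move=> P_derive Pf; elim=> [|n IH] nk; first by exists f; rewrite subn0.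
have [g [g_chain Pg]] := IH (ltnW nk).
rewrite -(subnSK nk) in Pg.
have [g1 [g1_dq Pg1]] := P_derive _ _ _ _ Pg.
by exists g1; split => //; exists g.
Qed.

End BGNChain.
Arguments bgn_domain {K d} U n.
Arguments bgn_chain {K d F} U f n.

Section Points.
Local Open Scope classical_set_scope.
Variables (K : TopField.type) (d : nat) (alpha : 'I_d -> nat).

Local Notation I := (sds_idx alpha).
Local Notation J := {dffun forall i : 'I_d, 'I_(alpha i).+1}.
Local Notation P := (Kpow K I).
Local Notation E := (bgn_space K d).
Local Notation tg k := (Tagged (fun i => 'I_(alpha i).+1) k).

Definition sel0 : J := [ffun l => ord0].
Definition base_nodes : {set I} := [set tg (sel0 l) | l : 'I_d]%SET.
Definition base_node (p : I) : I := tg (sel0 (tag p)).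
Definition delta (a : I) : P := fun p => (p == a)%:R.
Definition nodes (s : seq I) : {set I} := base_nodes :|: [set p in s]%SET.

Fixpoint bgn_lin (s : seq I) (z : P) : E (size s) :=
  match s return E (size s) with
  | [::] => sds_sel z sel0
  | b :: s' => (bgn_lin s' z, 0, z b - z (base_node b))
  end.

Fixpoint bgn_point (s : seq I) (y : P) : E (size s) :=
  match s return E (size s) with
  | [::] => sds_sel y sel0
  | b :: s' => (bgn_point s' y, bgn_lin s' (delta (base_node b)), y b - y (base_node b))
  end.

Lemma nodes_nil : nodes [::] = base_nodes.
Proof. by apply/setP => p; rewrite !inE orbF. Qed.

Lemma nodes_cons (b : I) (s : seq I) : nodes (b :: s) = b |: nodes s.
Proof. by apply/setP => p; rewrite !inE orbCA. Qed.

Lemma Kpow_affine (y z : P) (t : K) p : (y + t *: z) p = y p + t * z p.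
Proof. by []. Qed.

Lemma bgn_point_affine s y t z :
  bgn_point s (y + t *: z) = bgn_point s y + t *: bgn_lin s z.
Proof.
elim: s => [|b s IH] //=.
rewrite bgn_space_affine IH scaler0 addr0 !Kpow_affine; congr (_, _, _).
by ring.
Qed.

Lemma bgn_point_sub s x y : bgn_point s y - bgn_point s x = bgn_lin s (y - x).
Proof.
have := bgn_point_affine s x 1 (y - x).
by rewrite !scale1r [x + _]addrC subrK => ->; rewrite [bgn_point s x + _]addrC addrK.
Qed.

Lemma bgn_lin_scale s t z : bgn_lin s (t *: z) = t *: bgn_lin s z.
Proof.
have := bgn_point_affine s 0 t z; rewrite add0r => point_tz.
by rewrite -(subr0 (t *: z)) -bgn_point_sub point_tz [bgn_point s 0 + _]addrC addrK.
Qed.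

Lemma relabel_shift (y : P) a b : y + (y b - y a) *: delta a = (y \o relabel a b : P).
Proof.
apply: funext => p; rewrite Kpow_affine /delta /relabel /=.
by case: (p =P a) => [->|_]; rewrite ?mulr1 ?mulr0 ?addr0 // addrC subrK.
Qed.

Lemma bgn_point_relabel s y a b :
  bgn_point s (y \o relabel a b : P) = bgn_point s y + (y b - y a) *: bgn_lin s (delta a).
Proof. by rewrite -relabel_shift bgn_point_affine. Qed.

Lemma relabel_tag_preserving (a b : I) : tag a = tag b -> tag_preserving (relabel a b).
Proof. by move=> ab p; rewrite /relabel; case: (p =P a) => [->|]. Qed.

Lemma bgn_point_mem U s y : U_ang U y -> bgn_domain U (size s) (bgn_point s y).
Proof.
elim: s y => [|b s IH] y yU /=; first exact: yU.
split; first exact: IH.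
by rewrite -bgn_point_relabel; apply/IH/(U_ang_relabel _ yU)/relabel_tag_preserving.
Qed.

Lemma sds_sel_continuous j : continuous (fun y : P => sds_sel y j).
Proof. by apply: ptws_continuous => l; apply: proj_continuous. Qed.

Lemma node_diff_continuous a b : is_topological_field K ->
  continuous (fun y : P => y b - y a).
Proof. by move=> hK; apply: continuous_subr => //; apply: proj_continuous. Qed.

Lemma bgn_lin_continuous s : is_topological_field K -> continuous (bgn_lin s).
Proof.
move=> hK; elim: s => [|b s IH] /=; first exact: sds_sel_continuous.
apply: continuous_pair; last exact: node_diff_continuous.
by apply: continuous_pair => //; apply: cst_continuous.
Qed.

Lemma bgn_point_continuous s : is_topological_field K -> continuous (bgn_point s).
Proof.
move=> hK; elim: s => [|b s IH] /=; first exact: sds_sel_continuous.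
apply: continuous_pair; last exact: node_diff_continuous.
by apply: continuous_pair => //; apply: cst_continuous.
Qed.

End Points.

Section Evaluation.
Local Open Scope classical_set_scope.
Variables (K : TopField.type) (d : nat) (alpha : 'I_d -> nat).
Variables (F : TopLmod.type K) (U : set (Kpow K 'I_d)) (f : Kpow K 'I_d -> F).

Local Notation I := (sds_idx alpha).
Local Notation P := (Kpow K I).
Local Notation E := (bgn_space K d).
Local Notation tg k := (Tagged (fun i => 'I_(alpha i).+1) k).

Lemma divdiff_relabel_base (x : P) pi : tag_preserving pi ->
  divdiff f (pi @: base_nodes alpha) x = f (sds_sel (x \o pi : P) (sel0 alpha)).
Proof.
move=> pi_tag; have [j' pi_sel0] := tag_preserving_sel (sel0 alpha) pi_tag.
have -> : pi @: base_nodes alpha = [set tg (j' l) | l : 'I_d]%SET.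
  by rewrite -imset_comp; apply: eq_imset => l /=.
by rewrite divdiff_imset; congr f; apply: funext => l; rewrite /sds_sel /= pi_sel0.
Qed.

(* Quantifying over [pi] is what lets the induction hypothesis apply to the shifted
   point of a difference quotient, which is [bgn_point s] at [x \o pi \o relabel a b]. *)
Lemma bgn_point_divdiff (s : seq I) (g : E (size s) -> F) :
  uniq s -> {subset s <= ~: base_nodes alpha} -> bgn_chain U f (size s) g ->
  forall x, U_brack U x -> forall pi, tag_preserving pi -> {in nodes s &, injective pi} ->
  g (bgn_point s (x \o pi : P)) = divdiff f (pi @: nodes s) x.
Proof.
elim: s g => [|b s IH] g /= s_uniq s_nb g_chain x xU pi pi_tag pi_inj.
  by rewrite nodes_nil divdiff_relabel_base // g_chain.
case/andP: s_uniq => bs s_uniq; case: g_chain => g0 g0_chain g_dq.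
have b_nb : b \notin base_nodes alpha by have := s_nb b (mem_head b s); rewrite inE.
have {}s_nb p : p \in s -> p \in ~: base_nodes alpha.
  by move=> ps; rewrite s_nb ?inE ?ps ?orbT.
set a := base_node b.
have a_nodes : a \in nodes s by rewrite !inE; apply/orP; left; apply/imsetP; exists (tag b).
have b_nodes : b \notin nodes s by rewrite !inE negb_or b_nb.
rewrite nodes_cons in pi_inj *.
have pi_inj_s : {in nodes s &, injective pi}.
  by apply: sub_in2 pi_inj => p; apply: setU1r.
have pi_ab : x (pi b) - x (pi a) != 0.
  rewrite subr_eq0; apply: contraNneq b_nb => /esym x_ab.
  have /pi_inj : pi a = pi b by apply: U_brack_node_injective xU _ x_ab; rewrite !pi_tag.
  by move=> /(_ (setU1r _ a_nodes) (setU11 _ _)) <-; apply/imsetP; exists (tag b).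
have point_mem := bgn_point_mem (b :: s) (U_ang_relabel pi_tag xU.1).
rewrite g_dq; last by split.
rewrite /gdq /= -bgn_point_relabel.
have rel_tag : tag_preserving (pi \o relabel a b).
  by move=> p; rewrite /= pi_tag relabel_tag_preserving.
have rel_inj := relabel_injective_in (a := a) pi_inj b_nodes.
rewrite (IH _ s_uniq s_nb g0_chain x xU _ rel_tag rel_inj).
rewrite (IH _ s_uniq s_nb g0_chain x xU _ pi_tag pi_inj_s) imset_comp_relabel // imsetU1.
rewrite [RHS](divdiff_setU1 f (U_brack_coord_injective xU) (A := pi a) _ _
  (imset_notin pi_inj b_nodes)) ?pi_tag //.
exact: imset_f.
Qed.

Definition full_nodes : seq I := enum (~: base_nodes alpha).

Lemma nodes_full : nodes full_nodes = [set: I]%SET.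
Proof. by apply/setP => p; rewrite !inE mem_enum inE orbN. Qed.

Lemma size_full_nodes : size full_nodes = mabs alpha.
Proof.
have card_base : #|base_nodes alpha| = d.
  by rewrite card_imset ?card_ord // => l m /(congr1 tag).
have card_I : #|{: I}| = (mabs alpha + d)%N.
  rewrite card_tagged sumnE big_map big_enum /= /mabs.
  rewrite -[X in (_ + X)%N]card_ord -sum1_card -big_split /=.
  by apply: eq_big => // l _; rewrite card_ord addn1.
have := cardsC (base_nodes alpha); rewrite card_base card_I /full_nodes -cardE.
by move/eqP; rewrite addnC eqn_add2r => /eqP.
Qed.

Lemma bgn_point_full (g : E (size full_nodes) -> F) :
  bgn_chain U f (size full_nodes) g ->
  forall x, U_brack U x -> g (bgn_point full_nodes x) = fdd f x.
Proof.
move=> g_chain x xU.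
rewrite (bgn_point_divdiff (enum_uniq _) _ g_chain xU (pi := id)) //.
- by rewrite imset_id nodes_full divdiff_setT.
- by move=> p; rewrite mem_enum.
Qed.

End Evaluation.

Local Open Scope classical_set_scope.

Theorem lemma2p3 (K : TopField.type) (d : nat) (F : TopLmod.type K)
  (U : set (Kpow K 'I_d)) (f : Kpow K 'I_d -> F) :
  is_topological_field K -> is_tvs F ->
  (open U \/
   exists Ui : 'I_d -> set K,
     (forall i, Ui i `<=` closure (interior (Ui i))) /\
     U = [set x | forall i, Ui i (x i)]) ->
  (forall k : nat, CkBGN k U f -> CkSDS k U f) /\
  (forall (R : realType) (abs : K -> R) (sigma : R),
     is_valued_field abs -> 0 < sigma ->
     forall k : nat, CksigmaBGN abs sigma k U f -> CksigmaSDS abs sigma k U f).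
Proof.
move=> hK _ _; split=> [k fk|R abs sigma _ _ k fk].
  split=> [|alpha /andP[_]]; first by case: k fk => [|k] [].
  rewrite -size_full_nodes => Nk.
  have [g [g_chain gP]] :=
    exists_bgn_chain (P := @CkBGN K F) (fun _ _ _ _ => @proj2 _ _) fk Nk.
  have g_cont : {within bgn_domain U _, continuous g} by case: (k - _)%N gP => [|m] [].
  exists (g \o bgn_point (full_nodes alpha)); split; last exact: bgn_point_full.
  exact: continuous_within_comp g_cont (bgn_point_continuous hK) (bgn_point_mem _).
split=> [||alpha /andP[_]]; try by case: k fk => [|k] [].
rewrite -size_full_nodes => Nk.
have [g [g_chain gP]] := exists_bgn_chain (P := @CksigmaBGN K F R abs sigma)
  (fun _ _ _ _ h => let: And3 _ _ g1 := h in g1) fk Nk.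
have [g_cont g_hol] :
    {within bgn_domain U _, continuous g} /\ C0sigma abs sigma (bgn_domain U _) g.
  by case: (k - _)%N gP => [|m] [].
have point_in := @bgn_point_mem _ _ alpha U (full_nodes alpha).
exists (g \o bgn_point (full_nodes alpha)); split; last exact: bgn_point_full.
- exact: continuous_within_comp g_cont (bgn_point_continuous hK) point_in.
- exact: C0sigma_comp_affine g_hol (bgn_point_continuous hK) (bgn_lin_continuous hK)
    (bgn_point_sub _) (bgn_lin_scale _) point_in.
Qed.
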